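(* Let $L$ be a finite lattice. Then $\mathsf{C}(L)=\mathsf{Pol}_{0,1}(L)$ if and only if the only tolerances on $L$ are $\mathrm{id}_L$ and $L^2$.
   Context: $L$ has bounds $0,1$; $\mathrm{id}_L=\{(x,x):x\in L\}$. An $n$-ary aggregation function on $L$ ($n\ge1$) is a map $A:L^n\to L$, nondecreasing with respect to the componentwise order, with $A(0,\dots,0)=0$ and $A(1,\dots,1)=1$; $\mathsf{C}(L)$ is the set of all aggregation functions on $L$. Polynomials on $L$ are functions $L^n\to L$ obtained from projections and constant functions by finitely many pointwise joins and meets; $\mathsf{Pol}_{0,1}(L)$ is the set of polynomials $p$ with $p(0,\dots,0)=0$ and $p(1,\dots,1)=1$. A tolerance on $L$ is a reflexive, symmetric binary relation $T$ on $L$ such that $(a,b),(c,d)\in T$ imply $(a\vee c,b\vee d)\in T$ and $(a\wedge c,b\wedge d)\in T$. *)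

From HB Require Import structures.
From mathcomp Require Import all_boot all_order.
Set Implicit Arguments. Unset Strict Implicit. Unset Printing Implicit Defensive.
Import Order.TTheory.
Local Open Scope order_scope.

Section Defs.
Context {disp : Order.disp_t} {L : finTBLatticeType disp}.

Definition is_aggregation (n : nat) (A : ('I_n -> L) -> L) : Prop :=
  (forall x y : 'I_n -> L, (forall i, x i <= y i) -> A x <= A y) /\
  A (fun _ => \bot) = \bot /\ A (fun _ => \top) = \top.

Inductive polyterm (n : nat) : Type :=
| PVar of 'I_n
| PConst of L
| PJoin of polyterm n & polyterm n
| PMeet of polyterm n & polyterm n.

Fixpoint peval (n : nat) (t : polyterm n) (x : 'I_n -> L) : L :=
  match t with
  | PVar i => x i
  | PConst c => c
  | PJoin p q => peval p x `|` peval q x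
  | PMeet p q => peval p x `&` peval q x
  end.

Definition is_polynomial (n : nat) (f : ('I_n -> L) -> L) : Prop :=
  exists t : polyterm n, forall x, f x = peval t x.

Definition in_Pol01 (n : nat) (f : ('I_n -> L) -> L) : Prop :=
  is_polynomial f /\ f (fun _ => \bot) = \bot /\ f (fun _ => \top) = \top.

Definition is_tolerance (T : L -> L -> Prop) : Prop :=
  (forall x, T x x) /\ (forall x y, T x y -> T y x) /\
  (forall a b c d, T a b -> T c d -> T (a `|` c) (b `|` d)) /\
  (forall a b c d, T a b -> T c d -> T (a `&` c) (b `&` d)).

End Defs.

From HB Require Import structures.
From mathcomp Require Import all_boot all_order.
From Stdlib Require Import Classical.
Set Implicit Arguments. Unset Strict Implicit. Unset Printing Implicit Defensive.
Import Order.TTheory.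

(* Polynomials preserve every tolerance.  If C(L) = Pol01(L) and a tolerance
   relates c and d with d not below c, it also relates the values bot and top
   that the aggregation "indicator of the up-set of d" takes at c and d; and a
   tolerance relating bot and top relates everything.
   Conversely, if all tolerances are trivial, the tolerance generated by
   (a /\ b, a) is full whenever a is not below b, which yields a unary
   polynomial equal to top at a and to bot at b.  Meets of these give
   polynomial indicators of principal up-sets of L^n, and a monotone f is the
   join of the terms f a /\ [a <= x] over the finitely many a in L^n. *)

Local Open Scope order_scope.

Section Polynomials.
Context {disp : Order.disp_t} {L : finTBLatticeType disp}.
Implicit Types (a b c d : L) (p q : L -> L) (n : nat).

Lemma polynomial_ext n (f g : ('I_n -> L) -> L) :
  f =1 g -> is_polynomial f -> is_polynomial g.
Proof. by move=> fg [t ft]; exists t => x; rewrite -fg. Qed.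

Lemma polynomial_var n (i : 'I_n) : is_polynomial (fun x : 'I_n -> L => x i).
Proof. by exists (PVar i). Qed.

Lemma polynomial_const n c : is_polynomial (fun _ : 'I_n -> L => c).
Proof. by exists (PConst _ c). Qed.

Lemma polynomial_join n (f g : ('I_n -> L) -> L) :
  is_polynomial f -> is_polynomial g -> is_polynomial (fun x => f x `|` g x).
Proof. by move=> [t ft] [u gu]; exists (PJoin t u) => x /=; rewrite ft gu. Qed.

Lemma polynomial_meet n (f g : ('I_n -> L) -> L) :
  is_polynomial f -> is_polynomial g -> is_polynomial (fun x => f x `&` g x).
Proof. by move=> [t ft] [u gu]; exists (PMeet t u) => x /=; rewrite ft gu. Qed.

Lemma polynomial_comp m n (f : ('I_m -> L) -> L) (g : 'I_m -> ('I_n -> L) -> L) :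
  is_polynomial f -> (forall i, is_polynomial (g i)) ->
  is_polynomial (fun x => f (fun i => g i x)).
Proof.
move=> [t ft] gP; apply: polynomial_ext (fun x => esym (ft _)) _ => {f ft}.
elim: t => [i|c|t tP u uP|t tP u uP] /=.
- exact: gP.
- exact: polynomial_const.
- exact: polynomial_join.
- exact: polynomial_meet.
Qed.

Lemma polynomial_meets n (I : Type) (r : seq I) (P : pred I)
    (F : I -> ('I_n -> L) -> L) :
  (forall i, P i -> is_polynomial (F i)) ->
  is_polynomial (fun x => \meet_(i <- r | P i) F i x).
Proof.
move=> FP; elim: r => [|i r IH].
  by apply: polynomial_ext (polynomial_const _ \top) => x; rewrite big_nil.
have [Pi|nPi] := boolP (P i).
- apply: polynomial_ext (polynomial_meet (FP i Pi) IH) => x.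
  by rewrite big_cons Pi.
- by apply: polynomial_ext IH => x; rewrite big_cons (negbTE nPi).
Qed.

Lemma polynomial_joins n (I : Type) (r : seq I) (P : pred I)
    (F : I -> ('I_n -> L) -> L) :
  (forall i, P i -> is_polynomial (F i)) ->
  is_polynomial (fun x => \join_(i <- r | P i) F i x).
Proof.
move=> FP; elim: r => [|i r IH].
  by apply: polynomial_ext (polynomial_const _ \bot) => x; rewrite big_nil.
have [Pi|nPi] := boolP (P i).
- apply: polynomial_ext (polynomial_join (FP i Pi) IH) => x.
  by rewrite big_cons Pi.
- by apply: polynomial_ext IH => x; rewrite big_cons (negbTE nPi).
Qed.

Lemma polynomial_monotone n (f : ('I_n -> L) -> L) : is_polynomial f ->
  forall x y, (forall i, x i <= y i) -> f x <= f y.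
Proof.
move=> [t ft] x y xy; rewrite !ft {f ft}.
by elim: t => //= t tP u uP; [exact: leU2 | exact: leI2].
Qed.

Lemma polynomial_tolerance (T : L -> L -> Prop) n (f : ('I_n -> L) -> L) x y :
  is_tolerance T -> is_polynomial f ->
  (forall i, T (x i) (y i)) -> T (f x) (f y).
Proof.
move=> [Trefl [_ [Tjoin Tmeet]]] [t ft] xTy; rewrite !ft {f ft}.
by elim: t => //= t tP u uP; [exact: Tjoin | exact: Tmeet].
Qed.

Definition unary_poly (p : L -> L) : Prop :=
  is_polynomial (fun x : 'I_1 -> L => p (x ord0)).

Lemma unary_poly_id : unary_poly id.
Proof. exact: polynomial_var. Qed.

Lemma unary_poly_const c : unary_poly (fun _ => c).
Proof. exact: polynomial_const. Qed.

Lemma unary_poly_join p q :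
  unary_poly p -> unary_poly q -> unary_poly (fun z => p z `|` q z).
Proof. exact: polynomial_join. Qed.

Lemma unary_poly_meet p q :
  unary_poly p -> unary_poly q -> unary_poly (fun z => p z `&` q z).
Proof. exact: polynomial_meet. Qed.

Lemma unary_poly_compIr p a : unary_poly p -> unary_poly (fun z => p (z `&` a)).
Proof.
move=> pP; apply: (polynomial_comp (g := fun _ x => x ord0 `&` a) pP) => _.
exact: polynomial_meet (polynomial_var _) (polynomial_const _ a).
Qed.

Lemma unary_poly_coord n (i : 'I_n) p :
  unary_poly p -> is_polynomial (fun x : 'I_n -> L => p (x i)).
Proof.
by move=> pP; apply: (polynomial_comp (g := fun _ x => x i) pP) => _;
  exact: polynomial_var.
Qed.

Lemma unary_poly_monotone p a b : unary_poly p -> a <= b -> p a <= p b.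
Proof. by move=> pP ab; apply: (polynomial_monotone (f := fun x => p (x ord0)) pP). Qed.

Definition of_bool (B : bool) : L := if B then \top else \bot.

Lemma le_of_bool (B1 B2 : bool) : B1 ==> B2 -> of_bool B1 <= of_bool B2.
Proof. by case: B1 B2 => [] [] //= _; rewrite le0x. Qed.

Lemma meets_of_bool (I : finType) (B : I -> bool) :
  \meet_i of_bool (B i) = of_bool [forall i, B i].
Proof.
have [/forallP allB | /forallPn [i nBi]] := boolP [forall i, B i].
  by rewrite big1 // => i _; rewrite /of_bool allB.
by rewrite (bigD1 i) //= {1}/of_bool (negbTE nBi) meet0x.
Qed.

Lemma up_indicator_aggregation d : d != \bot ->
  is_aggregation (fun x : 'I_1 -> L => of_bool (d <= x ord0)).
Proof.
move=> d_neq0; split; [|split].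
- move=> x y xy; apply: le_of_bool; apply/implyP => dx.
  exact: le_trans dx (xy ord0).
- by rewrite /of_bool lex0 (negbTE d_neq0).
- by rewrite /of_bool lex1.
Qed.

Lemma tolerance_full_of_bot_top (T : L -> L -> Prop) :
  is_tolerance T -> T \bot \top -> forall x y, T x y.
Proof.
move=> [Trefl [Tsym [Tjoin Tmeet]]] T01 x y.
have T0 z : T \bot z by have := Tmeet _ _ _ _ T01 (Trefl z); rewrite meet0x meet1x.
have Tx : T x (x `|` y) by have := Tjoin _ _ _ _ (Trefl x) (T0 y); rewrite joinx0.
have Ty : T (x `|` y) y.
  by apply: Tsym; have := Tjoin _ _ _ _ (Trefl y) (T0 x); rewrite joinx0 joinC.
by have := Tmeet _ _ _ _ Tx Ty; rewrite joinKI joinIK.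
Qed.

Lemma tolerance_id_or_off_diagonal (T : L -> L -> Prop) : is_tolerance T ->
  (forall x y, T x y -> x = y) \/ exists c d, T c d /\ ~~ (d <= c).
Proof.
move=> [_ [Tsym _]].
have [|off] := classic (exists c d, T c d /\ ~~ (d <= c)); first by right.
left=> x y Txy; apply/eqP; rewrite eq_le.
have [_|nyx] := boolP (y <= x); last by case: off; exists x, y.
have [//|nxy] := boolP (x <= y).
by case: off; exists y, x; split; [exact: Tsym|].
Qed.

(* For c <= d this is the tolerance generated by the pair (c, d). *)
Definition tol_span c d (x y : L) : Prop :=
  exists2 p, unary_poly p & (p c <= x <= p d) && (p c <= y <= p d).

Lemma tol_span_tolerance c d : is_tolerance (tol_span c d).
Proof.
split; [|split; [|split]].
- by move=> x; exists (fun _ => x); [exact: unary_poly_const | rewrite lexx].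
- by move=> x y [p pP xy]; exists p; rewrite // andbC.
- move=> x y u v [p pP /and3P[/andP[px xp] py yp]] [q qP /and3P[/andP[qu uq] qv vq]].
  exists (fun z => p z `|` q z); first exact: unary_poly_join.
  by rewrite !leU2.
- move=> x y u v [p pP /and3P[/andP[px xp] py yp]] [q qP /and3P[/andP[qu uq] qv vq]].
  exists (fun z => p z `&` q z); first exact: unary_poly_meet.
  by rewrite !leI2.
Qed.

End Polynomials.

Section AggregationsArePolynomials.
Context {disp : Order.disp_t} {L : finTBLatticeType disp}.

Hypothesis tolerances_trivial : forall T : L -> L -> Prop, is_tolerance T ->
  (forall x y, T x y <-> x = y) \/ (forall x y, T x y).

Lemma separating_unary_poly (a b : L) : ~~ (a <= b) ->
  exists2 p, unary_poly p & (p a = \top) /\ (p b = \bot).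
Proof.
move=> nab.
have [Tid|Tfull] := tolerances_trivial (tol_span_tolerance (a `&` b) a).
  have : tol_span (a `&` b) a (a `&` b) a.
    by exists id; [exact: unary_poly_id | rewrite /= !lexx leIl].
  by move/Tid/eqP; rewrite -leEmeet (negbTE nab).
have [p pP] := Tfull \bot \top; rewrite lex0 le1x => /and3P[/andP[/eqP p0 _] _ /eqP p1].
exists (fun z => p (z `&` a)); first exact: unary_poly_compIr.
by rewrite meetxx p1 meetC p0.
Qed.

Lemma up_indicator_unary_poly (a : L) : unary_poly (fun z => of_bool (a <= z)).
Proof.
have sep z : exists q, [/\ unary_poly q, q a = \top & ~~ (a <= z) -> q z = \bot].
  have [az|naz] := boolP (a <= z).
    by exists (fun _ => \top); split=> //; exact: unary_poly_const.
  by have [q qP [qa qz]] := separating_unary_poly naz; exists q.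
have [q qP] := fin_all_exists sep.
apply: (polynomial_ext (f := fun x => \meet_z q z (x ord0))); last first.
  by apply: polynomial_meets => z _; have [] := qP z.
move=> x; apply/eqP; rewrite eq_le.
have [ax|nax] := boolP (a <= x ord0); rewrite /of_bool /= ?lex1 ?le0x ?andbT.
- apply/meetsP => z _; have [qz qza _] := qP z.
  by rewrite -qza unary_poly_monotone.
- by have [_ _ qxx] := qP (x ord0); rewrite (bigD1 (x ord0)) //= qxx // meet0x.
Qed.

Lemma up_indicator_polynomial n (a : 'I_n -> L) :
  is_polynomial (fun x => of_bool [forall i, a i <= x i]).
Proof.
apply: (polynomial_ext (f := fun x => \meet_i of_bool (a i <= x i))).
  by move=> x; rewrite meets_of_bool.
by apply: polynomial_meets => i _; exact: unary_poly_coord (up_indicator_unary_poly _).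
Qed.

(* Disjunctive normal form: f x is the join of the f a over all a <= x. *)
Lemma polynomial_of_monotone n (f : ('I_n -> L) -> L) :
  (forall x y, (forall i, x i <= y i) -> f x <= f y) -> is_polynomial f.
Proof.
move=> f_mono.
apply: (polynomial_ext
  (f := fun x => \join_(a : {ffun 'I_n -> L}) (f a `&` of_bool [forall i, a i <= x i]))).
  move=> x; apply/eqP; rewrite eq_le; apply/andP; split.
  - apply/joinsP => a _; rewrite /of_bool.
    have [/forallP ax|_] := boolP [forall i, a i <= x i].
      by rewrite meetx1 f_mono.
    by rewrite meetx0 le0x.
  - rewrite (bigD1 [ffun i => x i]) //=; apply: le_trans (leUl _ _).
    have -> : [forall i, [ffun i => x i] i <= x i] by apply/forallP => i; rewrite ffunE.
    by rewrite meetx1 f_mono // => i; rewrite ffunE.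
apply: polynomial_joins => a _.
exact: polynomial_meet (polynomial_const _ _) (up_indicator_polynomial a).
Qed.

End AggregationsArePolynomials.

Local Close Scope order_scope.

Theorem mainTheorem5 (disp : Order.disp_t) (L : finTBLatticeType disp) :
  (forall (n : nat), 0 < n -> forall f : ('I_n -> L) -> L,
      is_aggregation f <-> in_Pol01 f)
  <->
  (forall T : L -> L -> Prop, is_tolerance T ->
      (forall x y, T x y <-> x = y) \/ (forall x y, T x y)).
Proof.
split=> [aggE T tolT | tol_trivial n _ f].
- have [Tid|[c [d [Tcd ndc]]]] := tolerance_id_or_off_diagonal tolT.
    by left=> x y; split=> [/Tid | ->]; last by case: tolT.
  right; apply: tolerance_full_of_bot_top => //.
  have d_neq0 : d != \bot%O by apply: contraNneq ndc => ->; exact: le0x.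
  have [fP _] := (aggE 1 isT _).1 (up_indicator_aggregation d_neq0).
  have := polynomial_tolerance (x := fun _ => c) (y := fun _ => d) tolT fP (fun _ => Tcd).
  by rewrite /of_bool /= lexx (negbTE ndc).
- split=> [[f_mono f01] | [fP f01]]; split=> //.
  + exact: (polynomial_of_monotone tol_trivial f_mono).
  + exact: polynomial_monotone fP.
Qed.
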